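(* Let $X$ be a Hausdorff complex topological vector space with $\dim X>1$, and let $\Gamma$ be an SOT-dense subset of $\mathcal{B}(X)$. Then there exists $\Gamma_1\subset\Gamma$ such that $\Gamma_1$ is SOT-dense in $\mathcal{B}(X)$ and $\Gamma_1$ is not strictly transitive.
   Context: $\mathcal{B}(X)$ denotes the space of continuous linear operators on $X$. A set $\Gamma\subset\mathcal{B}(X)$ is strictly transitive if for each pair of nonzero $x,y\in X$ there exist $\alpha\in\mathbb{C}$ and $T\in\Gamma$ with $\alpha Tx=y$. The strong operator topology (SOT) on $\mathcal{B}(X)$ is the topology in which $T$ has a neighborhood basis of sets $\{S\in\mathcal{B}(X): Se_i-Te_i\in U,\ i=1,\dots,k\}$, where $k\in\mathbb{N}$, $e_1,\dots,e_k\in X$ are linearly independent, and $U$ is a neighborhood of $0$ in $X$. *)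

From Stdlib Require Import Reals.
Open Scope R_scope.

Record Cplx := mkC { Cre : R; Cim : R }.
Definition C0 : Cplx := mkC 0 0.
Definition C1 : Cplx := mkC 1 0.
Definition Cadd (a b : Cplx) : Cplx := mkC (Cre a + Cre b) (Cim a + Cim b).
Definition Copp (a : Cplx) : Cplx := mkC (- Cre a) (- Cim a).
Definition Cmul (a b : Cplx) : Cplx :=
  mkC (Cre a * Cre b - Cim a * Cim b) (Cre a * Cim b + Cim a * Cre b).
(** squared modulus; the Euclidean topology on C is given by balls *)
Definition Cnorm2 (a : Cplx) : R := Cre a * Cre a + Cim a * Cim a.
Definition Cdist_lt (a b : Cplx) (eps : R) : Prop :=
  Cnorm2 (Cadd a (Copp b)) < eps * eps.

Record CTVS := {
  vec :> Type;
  vadd : vec -> vec -> vec;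
  vzero : vec;
  vopp : vec -> vec;
  vscal : Cplx -> vec -> vec;
  vadd_assoc : forall x y z, vadd x (vadd y z) = vadd (vadd x y) z;
  vadd_comm : forall x y, vadd x y = vadd y x;
  vadd_0 : forall x, vadd x vzero = x;
  vadd_opp : forall x, vadd x (vopp x) = vzero;
  vscal_1 : forall x, vscal C1 x = x;
  vscal_mul : forall a b x, vscal a (vscal b x) = vscal (Cmul a b) x;
  vscal_addv : forall a x y, vscal a (vadd x y) = vadd (vscal a x) (vscal a y);
  vscal_addC : forall a b x, vscal (Cadd a b) x = vadd (vscal a x) (vscal b x);
  is_open : (vec -> Prop) -> Prop;
  open_full : is_open (fun _ => True);
  open_inter : forall U V, is_open U -> is_open V -> is_open (fun x => U x /\ V x);
  open_union : forall (F : (vec -> Prop) -> Prop),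
      (forall U, F U -> is_open U) -> is_open (fun x => exists U, F U /\ U x);
  vadd_cont : forall x y W, is_open W -> W (vadd x y) ->
      exists U V, is_open U /\ is_open V /\ U x /\ V y /\
        (forall u v, U u -> V v -> W (vadd u v));
  vscal_cont : forall a x W, is_open W -> W (vscal a x) ->
      exists eps U, eps > 0 /\ is_open U /\ U x /\
        (forall b u, Cdist_lt b a eps -> U u -> W (vscal b u))
}.

Arguments vadd {_}. Arguments vzero {_}. Arguments vopp {_}.
Arguments vscal {_}. Arguments is_open {_}.

Definition vsub {X : CTVS} (x y : X) : X := vadd x (vopp y).

Definition Hausdorff (X : CTVS) : Prop :=
  forall x y : X, x <> y -> exists U V, is_open U /\ is_open V /\ U x /\ V y /\
    (forall z, U z -> V z -> False).

Definition nbhd {X : CTVS} (x : X) (N : X -> Prop) : Prop :=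
  exists U, is_open U /\ U x /\ (forall z, U z -> N z).

Fixpoint lin_comb {X : CTVS} (c : nat -> Cplx) (e : nat -> X) (k : nat) : X :=
  match k with
  | O => vzero
  | S k' => vadd (lin_comb c e k') (vscal (c k') (e k'))
  end.

Definition lin_indep {X : CTVS} (e : nat -> X) (k : nat) : Prop :=
  forall c : nat -> Cplx, lin_comb c e k = vzero -> forall i, (i < k)%nat -> c i = C0.

Definition dim_gt1 (X : CTVS) : Prop :=
  exists x y : X, lin_indep (fun i => match i with O => x | _ => y end) 2.

(** B(X): continuous linear operators on X *)
Definition is_bounded_op {X : CTVS} (T : X -> X) : Prop :=
  (forall x y, T (vadd x y) = vadd (T x) (T y)) /\
  (forall a x, T (vscal a x) = vscal a (T x)) /\
  (forall W, is_open W -> is_open (fun x => W (T x))).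

Definition SOT_dense {X : CTVS} (G : (X -> X) -> Prop) : Prop :=
  forall T : X -> X, is_bounded_op T ->
  forall (k : nat) (e : nat -> X), lin_indep e k ->
  forall U : X -> Prop, nbhd vzero U ->
  exists S, G S /\ forall i, (i < k)%nat -> U (vsub (S (e i)) (T (e i))).

Definition strictly_transitive {X : CTVS} (G : (X -> X) -> Prop) : Prop :=
  forall x y : X, x <> vzero -> y <> vzero ->
  exists (a : Cplx) (T : X -> X), G T /\ vscal a (T x) = y.

(* Fix linearly independent x, y and let Gamma1 consist of the S in Gamma with
   S x outside the line C y; then no scalar multiple of an S in Gamma1 maps x to
   y.  For density, first perturb T by a small multiple of the identity so that
   T' x leaves the line.  In a Hausdorff space the line C y is closed (a square
   of scalars is compact, and the multiples a y with |a| large stay away from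
   any given point), so T' x has a neighbourhood W missing the line, and density of Gamma,
   applied to the e_i together with x, yields S in Gamma close to T' on the
   e_i with S x in W. *)
From Pilot Require Import Defs.
From Stdlib Require Import Reals Lra Lia Classical FunctionalExtensionality PropExtensionality.
Open Scope R_scope.

Lemma Cext (a b : Cplx) : Cre a = Cre b -> Cim a = Cim b -> a = b.
Proof. destruct a, b; simpl; intros; subst; reflexivity. Qed.

Definition Cinv (a : Cplx) : Cplx := mkC (Cre a / Cnorm2 a) (- Cim a / Cnorm2 a).

Lemma Cnorm2_pos (a : Cplx) : a <> Defs.C0 -> 0 < Cnorm2 a.
Proof.
  intros Ha. unfold Cnorm2.
  destruct (Rle_lt_dec (Cre a * Cre a + Cim a * Cim a) 0) as [Hle|Hlt]; [|exact Hlt].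
  exfalso; apply Ha, Cext; simpl; nra.
Qed.

Lemma Cinv_l (a : Cplx) : a <> Defs.C0 -> Cmul (Cinv a) a = Defs.C1.
Proof.
  intros Ha. assert (Hn := Cnorm2_pos a Ha).
  unfold Cinv, Cmul, Defs.C1; apply Cext; simpl; unfold Cnorm2 in *; field; lra.
Qed.

Lemma Cnorm2_inv (a : Cplx) : a <> Defs.C0 -> Cnorm2 (Cinv a) = / Cnorm2 a.
Proof.
  intros Ha. assert (Hn := Cnorm2_pos a Ha).
  unfold Cinv, Cnorm2 in *; simpl; field; lra.
Qed.

Lemma Cdist_lt_0 (a : Cplx) (eps : R) : Cdist_lt a Defs.C0 eps <-> Cnorm2 a < eps * eps.
Proof. unfold Cdist_lt, Cnorm2; simpl. rewrite !Ropp_0, !Rplus_0_r. tauto. Qed.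

Lemma Cdist_lt_refl (a : Cplx) (eps : R) : 0 < eps -> Cdist_lt a a eps.
Proof. unfold Cdist_lt, Cnorm2; simpl. intros. nra. Qed.

Lemma Cdist_lt_le (a b : Cplx) (e1 e2 : R) :
  0 < e1 <= e2 -> Cdist_lt b a e1 -> Cdist_lt b a e2.
Proof. unfold Cdist_lt. intros. nra. Qed.

Lemma Cball_forall_lt (k : nat) (Q : nat -> Cplx -> Prop) :
  (forall i, (i < k)%nat -> exists eps, eps > 0 /\ forall b, Cdist_lt b Defs.C0 eps -> Q i b) ->
  exists eps, eps > 0 /\ forall i, (i < k)%nat -> forall b, Cdist_lt b Defs.C0 eps -> Q i b.
Proof.
  induction k as [|k IHk]; intros HQ.
  - exists 1; split; [lra | intros; lia].
  - destruct IHk as [e1 [He1 H1]]; [intros; apply HQ; lia|].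
    destruct (HQ k ltac:(lia)) as [e2 [He2 H2]].
    assert (Hm : 0 < Rmin e1 e2) by (apply Rmin_pos; lra).
    exists (Rmin e1 e2); split; [lra|].
    intros i Hi b Hb. destruct (Nat.eq_dec i k) as [->|Hne].
    + apply H2, (Cdist_lt_le _ _ _ _ (conj Hm (Rmin_r e1 e2)) Hb).
    + apply H1; [lia|]. apply (Cdist_lt_le _ _ _ _ (conj Hm (Rmin_l e1 e2)) Hb).
Qed.

Section VectorAlgebra.
Context {X : CTVS}.

Lemma vadd0l (x : X) : vadd vzero x = x.
Proof. rewrite vadd_comm; apply vadd_0. Qed.

Lemma vaddNl (x : X) : vadd (vopp x) x = vzero.
Proof. rewrite vadd_comm; apply vadd_opp. Qed.

Lemma vaddIr (x y z : X) : vadd x z = vadd y z -> x = y.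
Proof.
  intros H.
  rewrite <- (vadd_0 _ x), <- (vadd_opp _ z), vadd_assoc, H, <- vadd_assoc, vadd_opp, vadd_0.
  reflexivity.
Qed.

Lemma vopp_unique (x y : X) : vadd x y = vzero -> y = vopp x.
Proof. intros H. rewrite <- (vadd0l y), <- (vaddNl x), <- vadd_assoc, H, vadd_0; reflexivity. Qed.

Lemma vscal0l (x : X) : vscal Defs.C0 x = vzero.
Proof.
  apply (vaddIr _ _ (vscal Defs.C0 x)).
  rewrite <- vscal_addC, vadd0l; f_equal; apply Cext; simpl; ring.
Qed.

Lemma vscal0r (a : Cplx) : vscal a (@vzero X) = vzero.
Proof. apply (vaddIr _ _ (vscal a vzero)). rewrite <- vscal_addv, !vadd0l; reflexivity. Qed.

Lemma vscalNl (a : Cplx) (x : X) : vscal (Copp a) x = vopp (vscal a x).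
Proof.
  apply vopp_unique. rewrite <- vscal_addC.
  replace (Cadd a (Copp a)) with Defs.C0 by (apply Cext; simpl; ring). apply vscal0l.
Qed.

Lemma vscalKV (a : Cplx) (x : X) : a <> Defs.C0 -> vscal (Cinv a) (vscal a x) = x.
Proof. intros Ha. rewrite vscal_mul, Cinv_l by exact Ha. apply vscal_1. Qed.

Lemma vsubK (x y : X) : vadd (vsub x y) y = x.
Proof. unfold vsub; rewrite <- vadd_assoc, vaddNl, vadd_0; reflexivity. Qed.

Lemma vsub_addKl (x y : X) : vsub (vadd x y) x = y.
Proof. unfold vsub. rewrite (vadd_comm _ x y), <- vadd_assoc, vadd_opp, vadd_0; reflexivity. Qed.

Lemma vsubvv (x : X) : vsub x x = vzero.
Proof. apply vadd_opp. Qed.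

Lemma vsub_trans (x y z : X) : vsub x z = vadd (vsub x y) (vsub y z).
Proof. unfold vsub. rewrite <- vadd_assoc, (vadd_assoc _ (vopp y)), vaddNl, vadd0l; reflexivity. Qed.

Lemma vaddACA (a b c d : X) : vadd (vadd a b) (vadd c d) = vadd (vadd a c) (vadd b d).
Proof. rewrite <- !vadd_assoc, (vadd_assoc _ b c d), (vadd_comm _ b c), <- vadd_assoc; reflexivity. Qed.

Lemma lin_comb_ext (c : nat -> Cplx) (f g : nat -> X) (k : nat) :
  (forall i, (i < k)%nat -> f i = g i) -> lin_comb c f k = lin_comb c g k.
Proof.
  induction k as [|k IHk]; simpl; intros H; [reflexivity|].
  rewrite IHk by (intros; apply H; lia). rewrite H by lia. reflexivity.
Qed.

Lemma vscal_lin_comb (a : Cplx) (c : nat -> Cplx) (e : nat -> X) (k : nat) :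
  vscal a (lin_comb c e k) = lin_comb (fun i => Cmul a (c i)) e k.
Proof.
  induction k as [|k IHk]; simpl; [apply vscal0r|].
  rewrite vscal_addv, IHk, vscal_mul; reflexivity.
Qed.

Lemma bounded_op0 (T : X -> X) : is_bounded_op T -> T vzero = vzero.
Proof.
  intros [Hadd _]. apply (vaddIr _ _ (T vzero)).
  rewrite <- Hadd, vadd_0, vadd0l; reflexivity.
Qed.

Lemma bounded_op_lin_comb (T : X -> X) (c : nat -> Cplx) (e : nat -> X) (k : nat) :
  is_bounded_op T -> T (lin_comb c e k) = lin_comb c (fun i => T (e i)) k.
Proof.
  intros HT. induction k as [|k IHk]; simpl; [apply bounded_op0, HT|].
  destruct HT as [Hadd [Hscal _]]. rewrite Hadd, Hscal, IHk; reflexivity.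
Qed.

Definition in_span (e : nat -> X) (k : nat) (x : X) : Prop :=
  exists c, x = lin_comb c e k.

Definition vpair (x y : X) : nat -> X := fun i => match i with O => x | _ => y end.

Lemma lin_indep_extend (e : nat -> X) (k : nat) (x : X) :
  lin_indep e k -> ~ in_span e k x ->
  lin_indep (fun i => if Nat.eqb i k then x else e i) (S k).
Proof.
  intros he hx c H. simpl in H. rewrite Nat.eqb_refl in H.
  rewrite (lin_comb_ext c _ e) in H
    by (intros i Hi; destruct (Nat.eqb_spec i k); [lia | reflexivity]).
  assert (Hck : c k = Defs.C0).
  { apply NNPP; intros Hck. apply hx.
    exists (fun i => Cmul (Cinv (c k)) (Cmul (Copp Defs.C1) (c i))).
    rewrite <- vscal_lin_comb, <- vscal_lin_comb, vscalNl, vscal_1,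
      <- (vopp_unique _ _ H), vscalKV by exact Hck.
    reflexivity. }
  rewrite Hck, vscal0l, vadd_0 in H.
  intros i Hi. destruct (Nat.eq_dec i k) as [->|Hne]; [exact Hck|].
  apply he; [exact H | lia].
Qed.

Lemma lin_indep2_nonzero (x y : X) : lin_indep (vpair x y) 2 -> x <> vzero /\ y <> vzero.
Proof.
  intros Hxy.
  assert (C10 : Defs.C1 <> Defs.C0) by (intros H; apply (f_equal Cre) in H; simpl in H; lra).
  split; intros E; apply C10.
  - refine (Hxy (fun i => match i with O => Defs.C1 | _ => Defs.C0 end) _ 0%nat _); [|lia].
    simpl; rewrite E, vscal0r, vscal0l, vadd0l, vadd_0; reflexivity.
  - refine (Hxy (fun i => match i with O => Defs.C0 | _ => Defs.C1 end) _ 1%nat _); [|lia].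
    simpl; rewrite E, vscal0r, vscal0l, vadd0l, vadd_0; reflexivity.
Qed.

End VectorAlgebra.

Section Neighbourhoods.
Context {X : CTVS}.

Lemma open_of_nbhd (S : X -> Prop) : (forall x, S x -> nbhd x S) -> is_open S.
Proof.
  intros H.
  replace S with (fun x => exists U, (is_open U /\ forall z, U z -> S z) /\ U x).
  - apply open_union. intros U [HU _]; exact HU.
  - apply functional_extensionality; intros x; apply propositional_extensionality; split.
    + intros [U [[_ HU] Ux]]; auto.
    + intros Sx. destruct (H x Sx) as [U [HU [Ux HUS]]]. exists U; auto.
Qed.

Lemma nbhd_and (p : X) (A B : X -> Prop) :
  nbhd p A -> nbhd p B -> nbhd p (fun z => A z /\ B z).
Proof.
  intros [U [HU [Up HUA]]] [V [HV [Vp HVB]]].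
  exists (fun z => U z /\ V z); split; [apply open_inter; assumption|].
  split; [auto|]. intros z [Uz Vz]; auto.
Qed.

Lemma nbhd_forall_lt (p : X) (k : nat) (N : nat -> X -> Prop) :
  (forall i, (i < k)%nat -> nbhd p (N i)) -> nbhd p (fun z => forall i, (i < k)%nat -> N i z).
Proof.
  induction k as [|k IHk]; intros H.
  - exists (fun _ => True); split; [apply open_full|]. split; [exact I | intros; lia].
  - destruct (nbhd_and p _ _ (IHk ltac:(intros; apply H; lia)) (H k ltac:(lia)))
      as [U [HU [Up HUN]]].
    exists U; split; [exact HU|]; split; [exact Up|].
    intros z Uz i Hi. destruct (HUN z Uz) as [Hlt Hk].
    destruct (Nat.eq_dec i k) as [->|Hne]; [exact Hk | apply Hlt; lia].
Qed.

Lemma nbhd_translate (p : X) (W : X -> Prop) :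
  nbhd p W -> nbhd vzero (fun v => W (vadd v p)).
Proof.
  intros [U [HU [Up HUW]]].
  assert (U0p : U (vadd vzero p)) by (rewrite vadd0l; exact Up).
  destruct (vadd_cont X _ _ U HU U0p) as [A [B [HA [_ [A0 [Bp HAB]]]]]].
  exists A; split; [exact HA|]; split; [exact A0|]. intros v Av; auto.
Qed.

Lemma nbhd0_split (U : X -> Prop) :
  nbhd vzero U -> exists A B, nbhd vzero A /\ nbhd vzero B /\
    forall a b, A a -> B b -> U (vadd a b).
Proof.
  intros [U0 [HU0 [U00 HU]]].
  assert (H00 : U0 (vadd vzero vzero)) by (rewrite vadd0l; exact U00).
  destruct (vadd_cont X _ _ U0 HU0 H00) as [A [B [HA [HB [A0 [B0 HAB]]]]]].
  exists A, B; split; [exists A; auto|]; split; [exists B; auto|]. auto.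
Qed.

Lemma lin_comb_continuous (c : nat -> Cplx) (f : nat -> X) (k : nat) (W : X -> Prop) :
  nbhd (lin_comb c f k) W ->
  exists N : nat -> X -> Prop, (forall i, (i < k)%nat -> nbhd (f i) (N i)) /\
    forall g, (forall i, (i < k)%nat -> N i (g i)) -> W (lin_comb c g k).
Proof.
  revert W; induction k as [|k IHk]; intros W [W0 [HW0 [Wf HW]]]; simpl in *.
  - exists (fun _ _ => True); split; [intros; lia | auto].
  - destruct (vadd_cont X _ _ W0 HW0 Wf) as [P [Q [HP [HQ [Pf [Qf HPQ]]]]]].
    destruct (vscal_cont X _ _ Q HQ Qf) as [eps [R [Heps [HR [Rf HRQ]]]]].
    destruct (IHk P ltac:(exists P; auto)) as [N [HN HNP]].
    exists (fun i => if Nat.eqb i k then R else N i); split.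
    + intros i Hi. destruct (Nat.eqb_spec i k) as [->|Hne]; [exists R; auto|].
      apply HN; lia.
    + intros g Hg. apply HW, HPQ.
      * apply HNP. intros i Hi. specialize (Hg i ltac:(lia)).
        destruct (Nat.eqb_spec i k); [lia | exact Hg].
      * apply HRQ; [apply Cdist_lt_refl; lra|].
        specialize (Hg k ltac:(lia)). rewrite Nat.eqb_refl in Hg; exact Hg.
Qed.

Lemma bounded_op_add_scal (T : X -> X) (lam : Cplx) :
  is_bounded_op T -> is_bounded_op (fun v => vadd (T v) (vscal lam v)).
Proof.
  intros [Hadd [Hscal Hcont]]. split; [|split].
  - intros x y. rewrite Hadd, vscal_addv. apply vaddACA.
  - intros a x. rewrite Hscal, vscal_addv, !vscal_mul.
    do 2 f_equal. apply Cext; simpl; ring.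
  - intros W HW. apply open_of_nbhd. intros x Wx.
    destruct (vadd_cont X _ _ W HW Wx) as [P [Q [HP [HQ [Px [Qx HPQ]]]]]].
    destruct (vscal_cont X _ _ Q HQ Qx) as [eps [R [Heps [HR [Rx HRQ]]]]].
    exists (fun u => P (T u) /\ R u); split; [apply open_inter; auto|]; split; [auto|].
    intros u [Pu Ru]. apply HPQ; [exact Pu|]. apply HRQ; [apply Cdist_lt_refl; lra | exact Ru].
Qed.

End Neighbourhoods.

(** * Compactness of rectangles of scalars *)

(* [F] is thought of as "is covered by finitely many members of a given family". *)
Lemma interval_local_to_global (F : (R -> Prop) -> Prop)
  (Fsub : forall A B : R -> Prop, (forall t, A t -> B t) -> F B -> F A)
  (Funion : forall A B : R -> Prop, F A -> F B -> F (fun t => A t \/ B t))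
  (a b : R) : a <= b ->
  (forall t, a <= t <= b -> exists d, d > 0 /\ F (fun s => t - d < s < t + d)) ->
  F (fun s => a <= s <= b).
Proof.
  intros Hab Hloc.
  set (E := fun x => a <= x <= b /\ F (fun s => a <= s <= x)).
  assert (Ea : E a).
  { split; [lra|]. destruct (Hloc a ltac:(lra)) as [d [Hd Fd]].
    refine (Fsub _ _ _ Fd); intros s Hs; lra. }
  destruct (completeness E (ex_intro _ b (fun x Ex => proj2 (proj1 Ex))) (ex_intro _ a Ea))
    as [c [Hc_ub Hc_lub]].
  assert (Hac : a <= c) by (apply Hc_ub, Ea).
  assert (Hcb : c <= b) by (apply Hc_lub; intros x [Hx _]; lra).
  destruct (Hloc c ltac:(lra)) as [d [Hd Fd]].
  assert (Hx : exists x, E x /\ c - d < x).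
  { apply NNPP; intros Hn. assert (c <= c - d); [|lra].
    apply Hc_lub. intros x Ex. apply Rnot_lt_le. intros Hlt. apply Hn; eauto. }
  destruct Hx as [x [[Hx Fx] Hxc]].
  assert (Hxc' : x <= c) by (apply Hc_ub; split; auto).
  set (m := Rmin b (c + d / 2)).
  assert (Hm_le : m <= c + d / 2) by apply Rmin_r.
  assert (Fm : F (fun s => a <= s <= m)).
  { apply (Fsub _ (fun s => (a <= s <= x) \/ (c - d < s < c + d))); [|apply Funion; auto].
    intros s Hs. destruct (Rle_dec s x); [left | right]; lra. }
  (* if [m < b], then [m = c + d/2] would belong to [E] above its supremum [c] *)
  assert (Hm : m = b).
  { unfold m, Rmin in *. destruct (Rle_dec b (c + d / 2)); [reflexivity|].
    exfalso. assert (c + d / 2 <= c); [apply Hc_ub; split; [lra | exact Fm] | lra]. }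
  rewrite <- Hm; exact Fm.
Qed.

Definition Csquare (b : Cplx) (d : R) (g : Cplx) : Prop :=
  Cre b - d < Cre g < Cre b + d /\ Cim b - d < Cim g < Cim b + d.

Lemma rectangle_local_to_global (F : (Cplx -> Prop) -> Prop)
  (Fsub : forall A B : Cplx -> Prop, (forall g, A g -> B g) -> F B -> F A)
  (Funion : forall A B : Cplx -> Prop, F A -> F B -> F (fun g => A g \/ B g))
  (a1 b1 a2 b2 : R) : a1 <= b1 -> a2 <= b2 ->
  (forall g, a1 <= Cre g <= b1 -> a2 <= Cim g <= b2 -> exists d, d > 0 /\ F (Csquare g d)) ->
  F (fun g => a1 <= Cre g <= b1 /\ a2 <= Cim g <= b2).
Proof.
  intros H1 H2 Hloc.
  apply (interval_local_to_global (fun A => F (fun g => A (Cre g) /\ a2 <= Cim g <= b2))).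
  - intros A B HAB. apply Fsub. intros g [Ag Hg]; auto.
  - intros A B HA HB. refine (Fsub _ _ _ (Funion _ _ HA HB)).
    intros g [[Ag|Bg] Hg]; [left | right]; auto.
  - exact H1.
  - intros t Ht.
    apply (interval_local_to_global
             (fun B => exists d, d > 0 /\ F (fun g => t - d < Cre g < t + d /\ B (Cim g)))).
    + intros A B HAB [d [Hd HB]]. exists d; split; [exact Hd|].
      refine (Fsub _ _ _ HB). intros g [Hg Ag]; auto.
    + intros A B [d1 [Hd1 HA]] [d2 [Hd2 HB]].
      assert (Hm1 := Rmin_l d1 d2). assert (Hm2 := Rmin_r d1 d2).
      exists (Rmin d1 d2); split; [apply Rmin_pos; lra|].
      refine (Fsub _ _ _ (Funion _ _ HA HB)).
      intros g [Hg [Ag|Bg]]; [left | right]; split; auto; lra.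
    + exact H2.
    + intros s Hs. destruct (Hloc (mkC t s) Ht Hs) as [d [Hd Hsq]].
      exists d; split; [exact Hd|]. exists d; split; [exact Hd | exact Hsq].
Qed.

(** * Lines are closed in a Hausdorff space *)

Section ClosedLines.
Context {X : CTVS}.
Hypothesis hX : Hausdorff X.

Definition away_from_line (y z : X) (S : Cplx -> Prop) : Prop :=
  nbhd z (fun w => forall g, S g -> w <> vscal g y).

Lemma away_from_line_sub (y z : X) (A B : Cplx -> Prop) :
  (forall g, A g -> B g) -> away_from_line y z B -> away_from_line y z A.
Proof. intros HAB [W [HW [Wz HWB]]]. exists W; split; [|split]; auto. Qed.

Lemma away_from_line_union (y z : X) (A B : Cplx -> Prop) :
  away_from_line y z A -> away_from_line y z B -> away_from_line y z (fun g => A g \/ B g).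
Proof.
  intros HA HB. destruct (nbhd_and _ _ _ HA HB) as [W [HW [Wz HWAB]]].
  exists W; split; [|split]; auto.
  intros w Ww g [Ag|Bg]; [apply (proj1 (HWAB w Ww)), Ag | apply (proj2 (HWAB w Ww)), Bg].
Qed.

Lemma away_from_line_local (y z : X) : (forall b, z <> vscal b y) ->
  forall b, exists d, d > 0 /\ away_from_line y z (Csquare b d).
Proof.
  intros Hz b. destruct (hX (vscal b y) z) as [P [Q [HP [HQ [Pb [Qz HPQ]]]]]].
  { intros E; apply (Hz b); auto. }
  destruct (vscal_cont X b y P HP Pb) as [eps [U [Heps [HU [Uy HUP]]]]].
  exists (eps / 2); split; [lra|]. exists Q; split; [|split]; auto.
  intros w Qw g [[Hr1 Hr2] [Hi1 Hi2]] ->. apply (HPQ (vscal g y)); [|exact Qw].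
  apply HUP; [|exact Uy]. unfold Cdist_lt, Cnorm2; simpl. nra.
Qed.

(* From continuity of [(a, u) |-> a u] at [(0, z)]: if [g y] is near [z] then
   [y = g^-1 (g y)] is near [0] once [g] is large. *)
Lemma away_from_line_far (y z : X) : y <> vzero ->
  exists r, r > 0 /\ away_from_line y z (fun g => r < Cnorm2 g).
Proof.
  intros Hy. destruct (hX vzero y) as [P [Q [HP [HQ [P0 [Qy HPQ]]]]]].
  { intros E; apply Hy; auto. }
  assert (Pz : P (vscal Defs.C0 z)) by (rewrite vscal0l; exact P0).
  destruct (vscal_cont X Defs.C0 z P HP Pz) as [eps [U [Heps [HU [Uz HUP]]]]].
  assert (Hee : 0 < eps * eps) by nra.
  exists (/ (eps * eps)); split; [apply Rinv_0_lt_compat, Hee|].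
  exists U; split; [|split]; auto.
  intros w Uw g Hg Hw.
  assert (Hg0 : g <> Defs.C0) by (intros ->; unfold Cnorm2 in Hg; simpl in Hg;
                              assert (0 < / (eps * eps)) by (apply Rinv_0_lt_compat, Hee); lra).
  apply (HPQ y); [|exact Qy].
  rewrite <- (vscalKV g y Hg0), <- Hw. apply HUP; [|exact Uw].
  apply Cdist_lt_0. rewrite Cnorm2_inv by exact Hg0.
  rewrite <- (Rinv_inv (eps * eps)). apply Rinv_lt_contravar; [|exact Hg].
  apply Rmult_lt_0_compat; [apply Rinv_0_lt_compat, Hee | apply Cnorm2_pos, Hg0].
Qed.

Lemma off_line_nbhd (y z : X) : y <> vzero -> (forall b, z <> vscal b y) ->
  nbhd z (fun w => forall b, w <> vscal b y).
Proof.
  intros Hy Hz. destruct (away_from_line_far y z Hy) as [r [Hr Hfar]].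
  set (M := r + 1).
  assert (Hnear : away_from_line y z (fun g => - M <= Cre g <= M /\ - M <= Cim g <= M)).
  { apply rectangle_local_to_global;
      [ apply away_from_line_sub | apply away_from_line_union | unfold M; lra | unfold M; lra |].
    intros g _ _. apply away_from_line_local, Hz. }
  destruct (away_from_line_union _ _ _ _ Hnear Hfar) as [W [HW [Wz HWl]]].
  exists W; split; [|split]; auto. intros w Ww b. apply (HWl w Ww).
  unfold Cnorm2, M in *.
  destruct (Rle_lt_dec (Cre b * Cre b) (M * M)); destruct (Rle_lt_dec (Cim b * Cim b) (M * M));
    unfold M in *; [left; split; split | right ..]; nra.
Qed.

End ClosedLines.

Section Density.
Context {X : CTVS}.

(* The extra point [x] is either a combination of the [e_i], handled by
   continuity of [lin_comb], or is adjoined to them as a new independent vector. *)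
Lemma SOT_dense_extra_point (G : (X -> X) -> Prop) :
  SOT_dense G -> (forall S, G S -> is_bounded_op S) ->
  forall T, is_bounded_op T -> forall k e, lin_indep e k ->
  forall A, nbhd vzero A -> forall x W, nbhd (T x) W ->
  exists S, G S /\ (forall i, (i < k)%nat -> A (vsub (S (e i)) (T (e i)))) /\ W (S x).
Proof.
  intros hdense hsub T hT k e he A HA x W HW.
  destruct (classic (in_span e k x)) as [[c ->]|Hx].
  - rewrite bounded_op_lin_comb in HW by exact hT.
    destruct (lin_comb_continuous c _ k W HW) as [N [HN HNW]].
    destruct (hdense T hT k e he _
                (nbhd_and _ _ _ HA (nbhd_forall_lt _ k _ (fun i Hi => nbhd_translate _ _ (HN i Hi)))))
      as [S [GS HS]].
    exists S; split; [exact GS|]; split; [intros i Hi; apply HS, Hi|].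
    rewrite bounded_op_lin_comb by (apply hsub, GS). apply HNW. intros i Hi.
    rewrite <- (vsubK (S (e i)) (T (e i))). apply (proj2 (HS i Hi)), Hi.
  - destruct (hdense T hT (S k) _ (lin_indep_extend e k x he Hx) _
                (nbhd_and _ _ _ HA (nbhd_translate _ _ HW))) as [S [GS HS]].
    exists S; split; [exact GS|]; split.
    + intros i Hi. destruct (HS i ltac:(lia)) as [HSi _].
      destruct (Nat.eqb_spec i k); [lia | exact HSi].
    + destruct (HS k ltac:(lia)) as [_ HSk]. rewrite Nat.eqb_refl in HSk.
      rewrite <- (vsubK (S x) (T x)). exact HSk.
Qed.

(* [T + lam] for small real [lam > 0]: if [T x] is on the line then
   [(T + lam) x = T x + lam x] is not, by independence of [x] and [y]. *)
Lemma bounded_op_near_off_line (T : X -> X) (x y : X) :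
  is_bounded_op T -> lin_indep (vpair x y) 2 ->
  forall B, nbhd vzero B -> forall k (e : nat -> X),
  exists T', is_bounded_op T' /\ (forall i, (i < k)%nat -> B (vsub (T' (e i)) (T (e i)))) /\
    forall b, T' x <> vscal b y.
Proof.
  intros hT Hxy B [B0 [HB0 [B00 HB]]] k e.
  destruct (classic (exists b0, T x = vscal b0 y)) as [[b0 Hb0]|Hoff].
  2:{ exists T; split; [exact hT|]; split.
      - intros i _. apply HB. rewrite vsubvv; exact B00.
      - intros b E; apply Hoff; eauto. }
  destruct (Cball_forall_lt k (fun i b => B0 (vscal b (e i)))) as [eps [Heps Hsmall]].
  { intros i _. assert (H : B0 (vscal Defs.C0 (e i))) by (rewrite vscal0l; exact B00).
    destruct (vscal_cont X _ _ B0 HB0 H) as [eps [U [He [_ [Ue HU]]]]].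
    exists eps; split; auto. }
  set (lam := mkC (eps / 2) 0).
  exists (fun v => vadd (T v) (vscal lam v)); split; [apply bounded_op_add_scal, hT|]; split.
  - intros i Hi. rewrite vsub_addKl. apply HB, Hsmall; [exact Hi|].
    apply Cdist_lt_0. unfold Cnorm2, lam; simpl. nra.
  - intros g Hg. rewrite Hb0 in Hg.
    assert (Hlam : lam = Defs.C0).
    { refine (Hxy (fun i => match i with O => lam | _ => Cadd b0 (Copp g) end) _ 0%nat _); [|lia].
      simpl. rewrite vadd0l, vscal_addC, vscalNl, vadd_assoc,
        (vadd_comm _ (vscal lam x)), Hg, vadd_opp. reflexivity. }
    apply (f_equal Cre) in Hlam. unfold lam in Hlam; simpl in Hlam. lra.
Qed.

Lemma SOT_dense_off_line (G : (X -> X) -> Prop) (x y : X) :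
  Hausdorff X -> SOT_dense G -> (forall S, G S -> is_bounded_op S) ->
  lin_indep (vpair x y) 2 ->
  SOT_dense (fun S => G S /\ forall b, S x <> vscal b y).
Proof.
  intros hX hdense hsub Hxy T hT k e he U HU.
  destruct (nbhd0_split U HU) as [A [B [HA [HB HAB]]]].
  destruct (bounded_op_near_off_line T x y hT Hxy B HB k e) as [T' [hT' [HT'B HT'off]]].
  assert (HW := off_line_nbhd hX y (T' x) (proj2 (lin_indep2_nonzero x y Hxy)) HT'off).
  destruct (SOT_dense_extra_point G hdense hsub T' hT' k e he A HA x _ HW)
    as [S [GS [HSA HSoff]]].
  exists S; split; [split; [exact GS | exact HSoff]|].
  intros i Hi. rewrite (vsub_trans _ (T' (e i))). apply HAB; auto.
Qed.

Lemma not_strictly_transitive_off_line (G : (X -> X) -> Prop) (x y : X) :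
  x <> vzero -> y <> vzero -> (forall S, G S -> forall b, S x <> vscal b y) ->
  ~ strictly_transitive G.
Proof.
  intros Hx Hy Hoff Htr. destruct (Htr x y Hx Hy) as [a [S [GS Ha]]].
  assert (Ha0 : a <> Defs.C0) by (intros ->; apply Hy; rewrite <- Ha; apply vscal0l).
  apply (Hoff S GS (Cinv a)). rewrite <- Ha, vscalKV by exact Ha0. reflexivity.
Qed.

End Density.

Theorem corollary3p13 (X : CTVS) (hX : Hausdorff X) (hdim : dim_gt1 X)
  (Gamma : (X -> X) -> Prop)
  (hsub : forall T, Gamma T -> is_bounded_op T)
  (hdense : SOT_dense Gamma) :
  exists Gamma1 : (X -> X) -> Prop,
    (forall T, Gamma1 T -> Gamma T) /\ SOT_dense Gamma1 /\ ~ strictly_transitive Gamma1.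
Proof.
  destruct hdim as [x [y Hxy]].
  destruct (lin_indep2_nonzero x y Hxy) as [Hx Hy].
  exists (fun S => Gamma S /\ forall b, S x <> vscal b y); split; [|split].
  - intros T [GT _]; exact GT.
  - exact (SOT_dense_off_line Gamma x y hX hdense hsub Hxy).
  - apply (not_strictly_transitive_off_line _ x y Hx Hy). intros S [_ HS]; exact HS.
Qed.
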